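(* Let $K$ be an $\mathcal R$-dioid, $m\ge 2$, and $e:=\sum_{i<m}q_ip_i\in C_m'$. Let $\phi(x)$ be an expression built with $+$, $\cdot$, ${}^*$ from elements of $K$, the element $\pi=q_0p_0$, the brackets $p_1,\ldots,p_{m-1},q_1,\ldots,q_{m-1}$ and a variable $x$ (so $p_0$ and $q_0$ occur only inside $\pi$), and for $c\in K\otimes_{\mathcal R}C_m'$ let $\phi(c)$ denote its value in $K\otimes_{\mathcal R}C_m'$ with $x:=c$. Then \[ p_0\,\phi(e)\,q_0=p_0\,\phi(1)\,q_0 \quad\text{and}\quad p_0\,\phi(1)\,q_0\in Z_{C_m'}K. \]
   Context: An $\mathcal R$-dioid is a dioid in which every regular subset $A$ of its multiplicative monoid has a least upper bound $\sum A$ with $\sum(AB)=(\sum A)(\sum B)$; equivalently, a $*$-continuous Kleene algebra. An $\mathcal R$-congruence is a semiring congruence $\rho$ such that regular sets with equal downward closures modulo $\rho$ have congruent suprema. $\Delta_m=\{p_0,\dots,p_{m-1},q_0,\dots,q_{m-1}\}$; $C_m'=\mathcal R\Delta_m^*/\rho$ where $\mathcal R\Delta_m^*$ is the algebra of regular languages over $\Delta_m$ and $\rho$ is the least $\mathcal R$-congruence containing $p_iq_j=\delta_{i,j}$ for $i,j<m$. $K\otimes_{\mathcal R}C_m'$ is the tensor product of $\mathcal R$-dioids (universal $\mathcal R$-dioid receiving $\mathcal R$-morphisms from $K$ and $C_m'$ with elementwise commuting images); elements of $K$ and $C_m'$ are identified with their images. $Z_{C_m'}K$ is the set of elements of $K\otimes_{\mathcal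 R}C_m'$ commuting with every element of $C_m'$. *)

From mathcomp Require Import all_boot all_algebra.
From Stdlib Require Import ClassicalEpsilon.

Set Implicit Arguments.
Unset Strict Implicit.
Unset Printing Implicit Defensive.
Import GRing.Theory.
Local Open Scope ring_scope.

Section DioidDefs.
Variable T : pzSemiRingType.

Definition dle (a b : T) : Prop := a + b = b.

Definition lub (A : T -> Prop) (s : T) : Prop :=
  (forall a, A a -> dle a s) /\ (forall u, (forall a, A a -> dle a u) -> dle s u).

Definition set_prod (A B : T -> Prop) : T -> Prop :=
  fun x => exists a b, A a /\ B b /\ x = a * b.

Inductive set_star (A : T -> Prop) : T -> Prop :=
  | set_star1 : set_star A 1
  | set_starS x a : set_star A x -> A a -> set_star A (x * a).

Inductive regular : (T -> Prop) -> Prop :=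
  | reg_empty : regular (fun _ => False)
  | reg_single a : regular (fun x => x = a)
  | reg_union A B : regular A -> regular B -> regular (fun x => A x \/ B x)
  | reg_prod A B : regular A -> regular B -> regular (set_prod A B)
  | reg_star A : regular A -> regular (set_star A)
  | reg_ext A B : regular A -> (forall x, A x <-> B x) -> regular B.

Definition is_dioid : Prop := forall a : T, a + a = a.

Definition is_Rdioid : Prop :=
  [/\ is_dioid,
      (forall A, regular A -> exists s, lub A s) &
      (forall A B s t, regular A -> regular B -> lub A s -> lub B t ->
         lub (set_prod A B) (s * t))].

Definition kstar (a : T) : T :=
  epsilon (inhabits 0) (lub (set_star (fun x => x = a))).

End DioidDefs.

Definition is_Rmorph (S T : pzSemiRingType) (f : S -> T) : Prop :=
  [/\ f 0 = 0, f 1 = 1,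
      (forall a b, f (a + b) = f a + f b),
      (forall a b, f (a * b) = f a * f b) &
      (forall A s, regular A -> lub A s ->
         lub (fun y => exists x, A x /\ y = f x) (f s))].

(* (C, p, q) is C_m' = R Delta_m^* / rho, characterized as the R-dioid
   presented by generators p_i, q_i and relations p_i q_j = delta_ij
   (R Delta_m^* being the free R-dioid on Delta_m). *)
Definition is_Cm (m : nat) (C : pzSemiRingType) (p q : 'I_m -> C) : Prop :=
  [/\ is_Rdioid C,
      (forall i j, p i * q j = (i == j)%:R) &
      (forall (D : pzSemiRingType) (p' q' : 'I_m -> D),
          is_Rdioid D -> (forall i j, p' i * q' j = (i == j)%:R) ->
          exists h : C -> D,
            [/\ is_Rmorph h,
                (forall i, h (p i) = p' i /\ h (q i) = q' i) &
                (forall h' : C -> D, is_Rmorph h' ->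
                   (forall i, h' (p i) = p' i /\ h' (q i) = q' i) ->
                   forall c, h' c = h c)])].

(* (T, iK, iC) is the tensor product K (x)_R C of R-dioids *)
Definition is_tensor (K C T : pzSemiRingType) (iK : K -> T) (iC : C -> T)
  : Prop :=
  [/\ is_Rdioid T, is_Rmorph iK, is_Rmorph iC,
      (forall k c, iK k * iC c = iC c * iK k) &
      (forall (D : pzSemiRingType) (f : K -> D) (g : C -> D),
          is_Rdioid D -> is_Rmorph f -> is_Rmorph g ->
          (forall k c, f k * g c = g c * f k) ->
          exists h : T -> D,
            [/\ is_Rmorph h, (forall k, h (iK k) = f k),
                (forall c, h (iC c) = g c) &
                (forall h' : T -> D, is_Rmorph h' ->
                   (forall k, h' (iK k) = f k) -> (forall c, h' (iC c) = g c) ->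
                   forall t, h' t = h t)])].

Inductive expr (K : Type) (m : nat) : Type :=
  | Econst of K
  | Epi
  | Ep (i : 'I_m) of (0 < i)%N
  | Eq (i : 'I_m) of (0 < i)%N
  | Evar
  | Eadd of expr K m & expr K m
  | Emul of expr K m & expr K m
  | Estar of expr K m.

Fixpoint eval (K : Type) (T : pzSemiRingType) (m : nat) (iK : K -> T)
  (piv : T) (pb qb : 'I_m -> T) (x : T) (e : expr K m) : T :=
  match e with
  | Econst k => iK k
  | Epi => piv
  | Ep i _ => pb i
  | Eq i _ => qb i
  | Evar => x
  | Eadd a b => eval iK piv pb qb x a + eval iK piv pb qb x b
  | Emul a b => eval iK piv pb qb x a * eval iK piv pb qb x b
  | Estar a => kstar (eval iK piv pb qb x a)
  end.

(* Because suprema of regular sets are compatible with products, the value of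
   phi(x) is the supremum of the values of the words of the regular language
   of phi, and p_0 phi(x) q_0 is the supremum of the words sandwiched between
   p_0 and q_0; so it suffices to consider one word.  Reading a word from left
   to right after p_0, the C-component of the partial product stays either 0
   or of the form p_0 p_(j_1) ... p_(j_n) with all j_k <> 0: p_j pushes,
   q_j pops, and pi = q_0 p_0 survives only on the empty stack; the K-letters
   commute with C and pile up in a central factor.  Such a C-component is
   fixed by right multiplication with e, since p_j e = p_j, so the letter x
   may be evaluated at 1 instead of e.  A final q_0 turns the C-component into
   0 or 1, which leaves an element commuting with all of C. *)

From mathcomp Require Import all_boot all_algebra.
From Stdlib Require Import ClassicalEpsilon.
Import GRing.Theory.
Local Open Scope ring_scope.
Set Implicit Arguments.
Unset Strict Implicit.
Unset Printing Implicit Defensive.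

Section DioidOrder.
Variable T : pzSemiRingType.

Lemma dle_antisym (a b : T) : dle a b -> dle b a -> a = b.
Proof. by rewrite /dle => ab ba; rewrite -ba addrC ab. Qed.

Lemma dle_trans (a b c : T) : dle a b -> dle b c -> dle a c.
Proof. by rewrite /dle => ab bc; rewrite -bc addrA ab. Qed.

Lemma lub_unique (A : T -> Prop) s t : lub A s -> lub A t -> s = t.
Proof. by case=> sA sl [tA tl]; apply: dle_antisym; [apply: sl | apply: tl]. Qed.

Lemma lub_ext (A B : T -> Prop) s : (forall x, A x <-> B x) -> lub A s -> lub B s.
Proof.
move=> AB [sA sl]; split=> [a /AB | u uB]; first exact: sA.
by apply: sl => a /AB; apply: uB.
Qed.

Hypothesis addxx : is_dioid T.

Lemma dle_refl (a : T) : dle a a.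
Proof. exact: addxx. Qed.

Lemma dle_mul (a b c d : T) : dle a b -> dle c d -> dle (a * c) (b * d).
Proof.
rewrite /dle => ab cd; have -> : b * d = (a + b) * (c + d) by rewrite ab cd.
by rewrite mulrDl !mulrDr !addrA addxx.
Qed.

Lemma lub_single (a : T) : lub (fun x => x = a) a.
Proof. by split=> [x -> | u]; [apply: dle_refl | apply]. Qed.

Lemma lub_union (A B : T -> Prop) s t : lub A s -> lub B t ->
  lub (fun x => A x \/ B x) (s + t).
Proof.
case=> sA sl [tB tl]; split.
  move=> a [/sA | /tB] le_a; apply: dle_trans le_a _.
    by rewrite /dle addrA addxx.
  by rewrite /dle addrCA addxx.
move=> u uAB; rewrite /dle -addrA (tl u) => [|b Bb]; last by apply: uAB; right.
by apply: sl => a Aa; apply: uAB; left.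
Qed.

End DioidOrder.

Section RDioid.
Variable T : pzSemiRingType.
Hypothesis RT : is_Rdioid T.

Let addxx : is_dioid T. Proof. by case: RT. Qed.

Lemma lub_star (A : T -> Prop) s : regular A -> lub A s ->
  lub (set_star A) (kstar s).
Proof.
case: RT => _ lub_ex lub_prod regA lubA.
have reg_pow : regular (set_star (fun x => x = s)) by apply/reg_star/reg_single.
have lub_pow : lub (set_star (fun x => x = s)) (kstar s).
  by apply: epsilon_spec; apply: lub_ex.
have [u lub_u] := lub_ex _ (reg_star regA).
have star_le : forall y, set_star A y -> dle y (kstar s).
  move=> y; elim=> [|x a _ le_x Aa]; first by apply: lub_pow.1; constructor.
  apply: dle_trans (dle_mul addxx le_x (lubA.1 _ Aa)) _.
  apply: (lub_prod _ _ _ _ reg_pow (reg_single s) lub_pow (lub_single addxx s)).2.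
  by move=> _ [y' [_ [pow_y' [-> ->]]]]; apply: lub_pow.1; constructor.
have pow_le : forall y, set_star (fun x => x = s) y -> dle y u.
  move=> y; elim=> [|x _ _ le_x ->]; first by apply: lub_u.1; constructor.
  apply: dle_trans (dle_mul addxx le_x (dle_refl addxx s)) _.
  apply: (lub_prod _ _ _ _ (reg_star regA) regA lub_u lubA).2.
  by move=> _ [y' [a [star_y' [Aa ->]]]]; apply: lub_u.1; constructor.
split=> // v v_ub; apply: dle_trans (lub_u.2 _ v_ub).
exact: lub_pow.2.
Qed.

Definition sandwich (a b : T) (A : T -> Prop) : T -> Prop :=
  fun t => exists y, A y /\ t = a * y * b.

Lemma sandwichE (a b : T) (A : T -> Prop) t :
  set_prod (set_prod (fun x => x = a) A) (fun x => x = b) t <-> sandwich a b A t.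
Proof.
split; first by case=> _ [_ [[_ [y [-> [Ay ->]]]] [-> ->]]]; exists y.
by case=> y [Ay ->]; exists (a * y), b; split=> //; exists a, y.
Qed.

Lemma regular_sandwich (a b : T) (A : T -> Prop) :
  regular A -> regular (sandwich a b A).
Proof.
move=> regA; apply: reg_ext (@sandwichE a b A).
by apply: reg_prod (reg_single _); apply: reg_prod (reg_single _) regA.
Qed.

Lemma lub_sandwich (a b : T) (A : T -> Prop) s : regular A -> lub A s ->
  lub (sandwich a b A) (a * s * b).
Proof.
case: RT => _ _ lub_prod regA lubA; apply: lub_ext (@sandwichE a b A) _.
apply: (lub_prod _ _ _ _ _ (reg_single _) _ (lub_single addxx _)).
- exact: reg_prod (reg_single _) regA.
- exact: lub_prod _ _ _ _ (reg_single _) regA (lub_single addxx _) lubA.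
Qed.

Lemma lub_commute (A : T -> Prop) s c : regular A -> lub A s ->
  (forall x, A x -> c * x = x * c) -> c * s = s * c.
Proof.
case: RT => _ _ lub_prod regA lubA cA.
have lub_cA := lub_prod _ _ _ _ (reg_single c) regA (lub_single addxx c) lubA.
have lub_Ac := lub_prod _ _ _ _ regA (reg_single c) lubA (lub_single addxx c).
apply: lub_unique lub_cA (lub_ext _ lub_Ac) => t; split.
  by case=> x [_ [Ax [-> ->]]]; exists c, x; rewrite cA.
by case=> _ [x [-> [Ax ->]]]; exists x, c; rewrite cA.
Qed.

End RDioid.

Inductive lang_star (X : Type) (L : seq X -> Prop) : seq X -> Prop :=
| lang_star_nil : lang_star L [::]
| lang_star_cat u v : lang_star L u -> L v -> lang_star L (u ++ v).

Definition atomic {K : Type} {m : nat} (a : expr K m) : bool :=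
  match a with Eadd _ _ | Emul _ _ | Estar _ => false | _ => true end.

Section Words.
Variables (K : Type) (T : pzSemiRingType) (m : nat).
Variables (iK : K -> T) (piv : T) (pb qb : 'I_m -> T).

Fixpoint lang (f : expr K m) : seq (expr K m) -> Prop :=
  match f with
  | Eadd a b => fun w => lang a w \/ lang b w
  | Emul a b => fun w => exists u v, lang a u /\ lang b v /\ w = u ++ v
  | Estar a => lang_star (lang a)
  | _ => fun w => w = [:: f]
  end.

Lemma lang_atomic f w : lang f w -> all atomic w.
Proof.
elim: f w => [k||i h|i h||a IHa b IHb|a IHa b IHb|a IHa] w /=; try by move=> ->.
- by case=> [/IHa|/IHb].
- by case=> u [v [/IHa atu [/IHb atv ->]]]; rewrite all_cat atu atv.
- by elim=> // u v _ atu /IHa atv; rewrite all_cat atu atv.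
Qed.

Definition word_eval (x : T) (w : seq (expr K m)) : T :=
  \prod_(a <- w) eval iK piv pb qb x a.

Lemma word_eval_nil x : word_eval x [::] = 1.
Proof. exact: big_nil. Qed.

Lemma word_eval_cat x u v : word_eval x (u ++ v) = word_eval x u * word_eval x v.
Proof. exact: big_cat. Qed.

Lemma word_eval_seq1 x a : word_eval x [:: a] = eval iK piv pb qb x a.
Proof. exact: big_seq1. Qed.

Lemma word_eval_seq1P x a t :
  t = eval iK piv pb qb x a <-> exists w, w = [:: a] /\ t = word_eval x w.
Proof.
by split=> [-> | [_ [-> ->]]]; [exists [:: a] |]; rewrite word_eval_seq1.
Qed.

Definition lang_values (x : T) (f : expr K m) : T -> Prop :=
  fun t => exists w, lang f w /\ t = word_eval x w.

Lemma lang_values_Eadd x a b t :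
  lang_values x a t \/ lang_values x b t <-> lang_values x (Eadd a b) t.
Proof.
split=> [[[w [hw ->]] | [w [hw ->]]] | [w [[hw | hw] ->]]].
- by exists w; split=> //; left.
- by exists w; split=> //; right.
- by left; exists w.
- by right; exists w.
Qed.

Lemma lang_values_Emul x a b t :
  set_prod (lang_values x a) (lang_values x b) t <-> lang_values x (Emul a b) t.
Proof.
split=> [[_ [_ [[u [hu ->]] [[v [hv ->]] ->]]]] | [_ [[u [v [hu [hv ->]]]] ->]]].
  by exists (u ++ v); rewrite word_eval_cat; split=> //; exists u, v.
exists (word_eval x u), (word_eval x v).
by rewrite word_eval_cat; split; [exists u | split; [exists v |]].
Qed.

Lemma lang_values_Estar x a t :
  set_star (lang_values x a) t <-> lang_values x (Estar a) t.
Proof.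
split=> [|[w [hw ->]]].
  elim=> [|_ _ _ [w [hw ->]] [v [hv ->]]].
    by exists [::]; rewrite word_eval_nil; split=> //; constructor.
  by exists (w ++ v); rewrite word_eval_cat; split=> //; constructor.
elim: hw => [|u v _ IH hv]; first by rewrite word_eval_nil; constructor.
by rewrite word_eval_cat; apply: set_starS IH _; exists v.
Qed.

Hypothesis RT : is_Rdioid T.

Lemma lang_values_regular_lub x f :
  regular (lang_values x f) /\ lub (lang_values x f) (eval iK piv pb qb x f).
Proof.
have addxx : is_dioid T by case: RT.
have [_ _ lub_prod] := RT.
elim: f => [k||i h|i h||a [ra la] b [rb lb]|a [ra la] b [rb lb]|a [ra la]].
1-5: by split; [apply: reg_ext (reg_single _) (word_eval_seq1P _ _)
               | apply: lub_ext (word_eval_seq1P _ _) (lub_single addxx _)].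
- split; first exact: reg_ext (reg_union ra rb) (lang_values_Eadd x a b).
  exact: lub_ext (lang_values_Eadd x a b) (lub_union addxx la lb).
- split; first exact: reg_ext (reg_prod ra rb) (lang_values_Emul x a b).
  exact: lub_ext (lang_values_Emul x a b) (lub_prod _ _ _ _ ra rb la lb).
- split; first exact: reg_ext (reg_star ra) (lang_values_Estar x a).
  exact: lub_ext (lang_values_Estar x a) (lub_star RT ra la).
Qed.

End Words.

Section Brackets.
Variables (C : pzSemiRingType) (m : nat) (p q : 'I_m -> C) (i0 : 'I_m).
Hypothesis pq : forall i j, p i * q j = (i == j)%:R.

Let e : C := \sum_(i < m) q i * p i.

Lemma pq_eq i : p i * q i = 1.
Proof. by rewrite pq eqxx. Qed.

Lemma pq_neq i j : i != j -> p i * q j = 0.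
Proof. by rewrite pq => /negbTE ->. Qed.

Lemma p_mule j : p j * e = p j.
Proof.
rewrite mulr_sumr (bigD1 j) //= mulrA pq_eq mul1r big1 ?addr0 // => i ij.
by rewrite mulrA pq_neq ?mul0r // eq_sym.
Qed.

Definition pstack (c : C) : Prop :=
  c = 0 \/ exists2 s : seq 'I_m, all (predC1 i0) s & c = p i0 * \prod_(j <- s) p j.

Lemma pstack_mule c : pstack c -> c * e = c.
Proof.
case=> [-> | [s _ ->]]; first by rewrite mul0r.
case/lastP: s => [|s j]; first by rewrite big_nil mulr1 p_mule.
by rewrite big_rcons -!mulrA p_mule.
Qed.

Lemma pstack_mulp c i : i != i0 -> pstack c -> pstack (c * p i).
Proof.
move=> ii0 [-> | [s s_i0 ->]]; first by left; rewrite mul0r.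
right; exists (rcons s i); first by rewrite all_rcons /= ii0.
by rewrite big_rcons !mulrA.
Qed.

Lemma pstack_mulq c i : i != i0 -> pstack c -> pstack (c * q i).
Proof.
move=> ii0 [-> | [s s_i0 ->]]; first by left; rewrite mul0r.
case/lastP: s s_i0 => [|s j]; first by left; rewrite big_nil mulr1 pq_neq // eq_sym.
rewrite all_rcons big_rcons -!mulrA => /andP[_ s_i0].
have [-> | ji] := eqVneq j i; last by left; rewrite pq_neq // !mulr0.
by right; exists s; rewrite // pq_eq !mulr1.
Qed.

Lemma pstack_mulpi c : pstack c -> pstack (c * (q i0 * p i0)).
Proof.
move=> [-> | [s s_i0 ->]]; first by left; rewrite mul0r.
case/lastP: s s_i0 => [|s j].
  by right; exists [::]; rewrite // big_nil !mulr1 mulrA pq_eq mul1r.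
rewrite all_rcons big_rcons => /andP[ji0 _]; left.
by rewrite -!mulrA (mulrA (p j)) pq_neq // mul0r !mulr0.
Qed.

Lemma pstack_mulq0 c : pstack c -> c * q i0 = 0 \/ c * q i0 = 1.
Proof.
move=> [-> | [s s_i0 ->]]; first by left; rewrite mul0r.
case/lastP: s s_i0 => [|s j]; first by right; rewrite big_nil mulr1 pq_eq.
rewrite all_rcons big_rcons -!mulrA => /andP[ji0 _].
by left; rewrite pq_neq // !mulr0.
Qed.

End Brackets.

Section Sandwich.
Variables (K C T : pzSemiRingType) (m : nat) (p q : 'I_m -> C) (i0 : 'I_m).
Variables (iK : K -> T) (iC : C -> T).
Hypothesis i0_eq0 : i0 = 0 :> nat.
Hypothesis pq : forall i j, p i * q j = (i == j)%:R.
Hypothesis iC0 : iC 0 = 0.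
Hypothesis iC1 : iC 1 = 1.
Hypothesis iCM : forall a b, iC (a * b) = iC a * iC b.
Hypothesis iKC : forall k c, iK k * iC c = iC c * iK k.

Let e : C := \sum_(i < m) q i * p i.
Let ev (x : T) := eval iK (iC (q i0 * p i0)) (fun i => iC (p i)) (fun i => iC (q i)) x.
Let word_ev (x : T) :=
  word_eval iK (iC (q i0 * p i0)) (fun i => iC (p i)) (fun i => iC (q i)) x.

Definition centralC (y : T) : Prop := forall c, iC c * y = y * iC c.

Definition central_pstack (y : T) : Prop :=
  exists k c, [/\ centralC k, pstack p i0 c & y = k * iC c].

Lemma central_pstack_step y a : atomic a -> central_pstack y ->
  y * ev (iC e) a = y * ev 1 a /\ central_pstack (y * ev 1 a).
Proof.
move=> + [k [c [kC stc ->]]].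
have mulC d : pstack p i0 (c * d) -> central_pstack (k * iC c * iC d).
  by exists k, (c * d); rewrite -mulrA iCM.
have ne_i0 (i : 'I_m) : (0 < i)%N -> i != i0.
  by move=> i_gt0; apply/eqP=> ii0; move: i_gt0; rewrite ii0 i0_eq0.
case: a => [k'||i i_gt0|i i_gt0||//|//|//] _; rewrite /ev /=.
- split=> //; exists (k * iK k'), c; split=> //; last by rewrite -!mulrA iKC.
  by move=> d; rewrite mulrA kC -!mulrA iKC.
- by split=> //; exact/mulC/(pstack_mulpi pq).
- by split=> //; exact/mulC/(pstack_mulp (ne_i0 _ i_gt0)).
- by split=> //; exact/mulC/(pstack_mulq pq (ne_i0 _ i_gt0)).
- by rewrite mulr1 -mulrA -iCM (pstack_mule pq stc); split=> //; exists k, c.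
Qed.

Lemma central_pstack_word y w : all atomic w -> central_pstack y ->
  y * word_ev (iC e) w = y * word_ev 1 w /\ central_pstack (y * word_ev 1 w).
Proof.
elim: w y => [|a w IH] y; first by rewrite /word_ev !word_eval_nil mulr1.
rewrite /word_ev /word_eval !big_cons !mulrA /= => /andP[ata atw] sty.
have [-> sty'] := central_pstack_step ata sty.
exact: IH.
Qed.

Lemma central_pstack_p0 : central_pstack (iC (p i0)).
Proof.
exists 1, (p i0); split; last by rewrite mul1r.
  by move=> d; rewrite mul1r mulr1.
by right; exists [::]; rewrite // big_nil mulr1.
Qed.

Lemma central_pstack_mulq0 y : central_pstack y -> centralC (y * iC (q i0)).
Proof.
move=> [k [c [kC stc ->]]] d; rewrite -mulrA -iCM.
by case: (pstack_mulq0 pq stc) => ->; rewrite ?iC0 ?iC1 ?mulr0 ?mul0r ?mulr1.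
Qed.

Variable phi : expr K m.
Let values (x : T) :=
  lang_values iK (iC (q i0 * p i0)) (fun i => iC (p i)) (fun i => iC (q i)) x phi.

Lemma sandwich_lang_values_e t :
  sandwich (iC (p i0)) (iC (q i0)) (values (iC e)) t <->
  sandwich (iC (p i0)) (iC (q i0)) (values 1) t.
Proof.
have word_e w : lang phi w -> iC (p i0) * word_ev (iC e) w = iC (p i0) * word_ev 1 w.
  by move=> hw; apply: (central_pstack_word (lang_atomic hw) central_pstack_p0).1.
by split=> -[_ [[w [hw ->]] ->]];
  [exists (word_ev 1 w) | exists (word_ev (iC e) w)];
  rewrite (word_e w hw); split=> //; exists w.
Qed.

Lemma sandwich_lang_values_central t :
  sandwich (iC (p i0)) (iC (q i0)) (values 1) t -> centralC t.
Proof.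
move=> [_ [[w [hw ->]] ->]]; apply: central_pstack_mulq0.
exact: (central_pstack_word (lang_atomic hw) central_pstack_p0).2.
Qed.

End Sandwich.

Theorem theorem12 (K C T : pzSemiRingType) (m : nat) (hm : (2 <= m)%N)
  (p q : 'I_m -> C) (iK : K -> T) (iC : C -> T) (phi : expr K m) :
  is_Rdioid K -> is_Cm p q -> is_tensor iK iC ->
  let i0 : 'I_m := Ordinal (ltnW hm) in
  let e : C := \sum_(i < m) q i * p i in
  let ev (x : T) := eval iK (iC (q i0 * p i0)) (fun i => iC (p i))
                         (fun i => iC (q i)) x phi in
  iC (p i0) * ev (iC e) * iC (q i0) = iC (p i0) * ev 1 * iC (q i0) /\
  (forall c : C, iC c * (iC (p i0) * ev 1 * iC (q i0))
                 = (iC (p i0) * ev 1 * iC (q i0)) * iC c).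
Proof.
move=> _ [_ pq _] [RT _ [iC0 iC1 _ iCM _] iKC _] i0 e ev.
have i0_eq0 : i0 = 0 :> nat by [].
have [reg_e lub_e] := lang_values_regular_lub iK (iC (q i0 * p i0))
  (fun i => iC (p i)) (fun i => iC (q i)) RT (iC e) phi.
have [reg_1 lub_1] := lang_values_regular_lub iK (iC (q i0 * p i0))
  (fun i => iC (p i)) (fun i => iC (q i)) RT 1 phi.
split.
  apply: lub_unique (lub_sandwich RT _ _ reg_e lub_e) _.
  apply: lub_ext (lub_sandwich RT _ _ reg_1 lub_1) => t.
  by rewrite (sandwich_lang_values_e i0_eq0 pq iCM iKC).
move=> c; apply: (lub_commute RT (regular_sandwich _ _ reg_1)
  (lub_sandwich RT _ _ reg_1 lub_1)) => t.
by move/(sandwich_lang_values_central i0_eq0 pq iC0 iC1 iCM iKC); apply.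
Qed.
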